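(* As $d \to \infty$, \[ m_{\mathcal S}(d) \geq (1+o(1))\frac{\log d}{\log \log d}, \] where $\mathcal S$ is the class of star forests. In other words, there is a function $\varepsilon(d) \to 0$ as $d\to\infty$ such that for every $d$ there exists a family of at least $(1+\varepsilon(d))\frac{\log d}{\log\log d}$ star forests (minus one) — more precisely, a family of $m_{\mathcal S}(d)-1$ star forests — showing that $m_{\mathcal S}(d) \geq (1+\varepsilon(d))\frac{\log d}{\log \log d}$.
   Context: All graphs are finite. Given a family $\mathcal G = \{G_1,\dots,G_k\}$ of graphs all spanning a common vertex set $V$, a cooperative coloring of $\mathcal G$ is a family of sets $R_1,\dots,R_k \subseteq V$ such that each $R_i$ is an independent set of $G_i$ and $V = \bigcup_{i=1}^k R_i$. For a graph class $\mathcal H$, $m_{\mathcal H}(d)$ denotes the minimum value $m$ such that every family $\mathcal G$ of at least $m$ graphs from $\mathcal H$, each of maximum degree at most $d$, spanning a common vertex set, has a cooperative coloring. A star forest is a graph each of whose connected components is a star (a tree with at most one vertex of degree greater than $1$). $\mathcal S$ denotes the class of star forests. Logarithms are natural, and asymptotic notation is as $d \to \infty$. *)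

From mathcomp Require Import all_boot.
From Stdlib Require Import Reals.
Set Implicit Arguments.
Unset Strict Implicit.
Unset Printing Implicit Defensive.

Definition simple_graph (V : finType) (G : rel V) : Prop :=
  (forall x, ~~ G x x) /\ (forall x y, G x y = G y x).

Definition max_deg_le (V : finType) (G : rel V) (d : nat) : Prop :=
  forall x : V, #|[set y | G x y]| <= d.

(* Star forest: every connected component is a star, i.e. in the component of
   any vertex x there is a center c such that every edge of that component is
   incident to c (a single vertex is a star with no edges). *)
Definition star_forest (V : finType) (G : rel V) : Prop :=
  forall x : V, exists c : V,
    forall u v, connect G x u -> G u v -> (u == c) || (v == c).

Definition independent (V : finType) (G : rel V) (R : {set V}) : Prop :=
  forall x y, x \in R -> y \in R -> ~~ G x y.

Definition cooperative_coloring (V : finType) (k : nat) (G : 'I_k -> rel V)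
    (R : 'I_k -> {set V}) : Prop :=
  (forall i, independent (G i) (R i)) /\ (forall v : V, exists i, v \in R i).

Definition has_cooperative_coloring (V : finType) (k : nat) (G : 'I_k -> rel V) : Prop :=
  exists R, cooperative_coloring G R.

(* m is admissible for the class of star forests and degree bound d: every family
   of at least m star forests, each of maximum degree at most d, spanning a common
   vertex set, has a cooperative coloring.  m_S(d) is the least admissible m. *)
Definition star_admissible (d m : nat) : Prop :=
  forall (V : finType) (k : nat) (G : 'I_k -> rel V),
    m <= k ->
    (forall i, simple_graph (G i) /\ star_forest (G i) /\ max_deg_le (G i) d) ->
    has_cooperative_coloring G.

(* "m_S(d) >= x": every admissible m (in particular the least one) is >= x. *)
Definition mS_ge (d : nat) (x : R) : Prop :=
  forall m : nat, star_admissible d m -> (x <= INR m)%R.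

From mathcomp Require Import all_boot.
From Stdlib Require Import Reals Lra.
From Coquelicot Require Import Rcomplements.
Set Implicit Arguments.
Unset Strict Implicit.
Unset Printing Implicit Defensive.

(* Take k colours and the repetition-free words over them as vertices; the
   graph G_i joins every word a to every word extending a ++ [i].  A word
   containing i is a leaf of G_i hanging from its prefix before i, so G_i is a
   star forest, and a centre a has at most k^k leaves.  These k graphs have no
   cooperative colouring: start from the empty word and repeatedly append the
   colour of the current word.  That colour i never occurs in the word already,
   since otherwise the prefix before i, which received colour i earlier, would
   be adjacent to it in G_i; so after k + 1 steps we would get a
   repetition-free word of length k + 1.  Hence an admissible m satisfies
   m^m > d, i.e. m >= ln d / ln ln d once ln ln d >= 1. *)

(* Rcomplements opens R_scope globally. *)
Local Open Scope nat_scope.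

Lemma star_forest_of_center (V : finType) (G : rel V) (c : V -> V) :
  (forall u v, G u v -> c u = c v /\ (u == c u) || (v == c v)) -> star_forest G.
Proof.
move=> Gc x; exists (c x) => u v xu /Gc[cuv uv_c].
have same_center : closed G [pred w | c w == c x].
  by move=> ? ? /Gc[c_eq _]; rewrite !inE c_eq.
move: (closed_connect same_center xu); rewrite !inE eqxx => /esym/eqP <-.
by rewrite [X in v == X]cuv.
Qed.

Lemma uniq_size_le_card (T : finType) (s : seq T) : uniq s -> size s <= #|T|.
Proof. by move/card_uniqP <-; apply: max_card. Qed.

Lemma nth_notin_inj (T : eqType) (x0 : T) (s1 s2 : seq T) :
  x0 \notin s1 -> x0 \notin s2 -> nth x0 s1 =1 nth x0 s2 -> s1 = s2.
Proof.
have size_le t1 t2 : x0 \notin t2 -> nth x0 t1 =1 nth x0 t2 -> size t2 <= size t1.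
  move=> t2x0 e; rewrite leqNgt; apply: contra t2x0 => lt.
  by rewrite -(nth_default x0 (leqnn (size t1))) e mem_nth.
move=> s1x0 s2x0 e; apply: (eq_from_nth (x0 := x0)) => [|j _]; last exact: e.
by apply/eqP; rewrite eqn_leq !size_le.
Qed.

Lemma nth_ffun_inj (T : eqType) (n : nat) (x0 : T) (s1 s2 : seq T) :
  x0 \notin s1 -> x0 \notin s2 -> size s1 <= n -> size s2 <= n ->
  [ffun j : 'I_n => nth x0 s1 j] = [ffun j : 'I_n => nth x0 s2 j] -> s1 = s2.
Proof.
move=> s1x0 s2x0 s1n s2n e; apply: nth_notin_inj s1x0 s2x0 _ => j.
have [lt_jn | le_nj] := ltnP j n; first by move/ffunP/(_ (Ordinal lt_jn)): e; rewrite !ffunE.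
by rewrite !nth_default // ?(leq_trans s1n) ?(leq_trans s2n).
Qed.

Lemma prefix_rcons_eq (T : eqType) (s t : seq T) x :
  prefix s (rcons t x) = (s == rcons t x) || prefix s t.
Proof.
elim: t s => [|z t IH] [|y s] //=; first by rewrite eqseq_cons orbF; case: s.
by rewrite IH eqseq_cons andb_orr.
Qed.

Section Hub.
Variables (T : eqType) (i : T).

(* The centre of the star of [branch_graph i] containing [s]. *)
Definition hub (s : seq T) := take (index i s) s.
Definition tail (s : seq T) := drop (index i s).+1 s.

Lemma hub_notin s : i \notin hub s.
Proof.
apply/(nthP i) => -[j]; rewrite size_takel ?index_size // => lt_j.
rewrite nth_take //; apply/eqP; exact: (negbT (before_find i lt_j)).
Qed.

Lemma hub_id s : i \notin s -> hub s = s.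
Proof. by move=> si; rewrite /hub memNindex ?take_size. Qed.

Lemma hubK s : hub (hub s) = hub s.
Proof. exact/hub_id/hub_notin. Qed.

Lemma hub_cat a r : i \notin a -> hub (a ++ i :: r) = a.
Proof. by move=> ai; rewrite /hub index_cat (negbTE ai) /= eqxx addn0 take_size_cat. Qed.

Lemma hub_tailK s : i \in s -> s = hub s ++ i :: tail s.
Proof.
by move=> si; rewrite -{1}(cat_take_drop (index i s) s) (drop_nth i) ?index_mem ?nth_index.
Qed.

Lemma tail_notin s : uniq s -> i \in s -> i \notin tail s.
Proof. by move=> + si; rewrite {1}(hub_tailK si) cat_uniq /= => /and4P[]. Qed.

Lemma prefix_rcons_hub a s : uniq s -> prefix (rcons a i) s = (i \in s) && (hub s == a).
Proof.
move=> s_uniq; apply/idP/andP => [/prefixP[r s_def] | [si /eqP <-]].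
  move: s_uniq; rewrite s_def cat_rcons cat_uniq /= negb_or => /and4P[_ /andP[ai _] _ _].
  by rewrite hub_cat // mem_cat inE eqxx orbT.
by rewrite {2}(hub_tailK si) -cat_rcons prefix_prefix.
Qed.

End Hub.

Section BranchGraphs.
Variable k : nat.

Lemma uniq_word_size (s : seq 'I_k) : uniq s -> size s <= k.
Proof. by move/uniq_size_le_card; rewrite card_ord. Qed.

Definition uniq_words : seq (seq 'I_k) :=
  [seq s <- [seq val t | n <- iota 0 k.+1, t <- enum {: n.-tuple 'I_k}] | uniq s].

Lemma mem_uniq_words s : (s \in uniq_words) = uniq s.
Proof.
rewrite mem_filter; have [s_uniq | //] := boolP (uniq s).
have s_le_k : size s < k.+1 by rewrite ltnS uniq_word_size.
by apply: (allpairs_f_dep (fun n (t : n.-tuple 'I_k) => val t) (y := in_tuple s));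
  rewrite ?mem_iota ?mem_enum.
Qed.

Definition vertex := seq_sub uniq_words.

Lemma vertex_uniq (x : vertex) : uniq (val x).
Proof. by rewrite -mem_uniq_words; apply: ssvalP. Qed.

Definition vertex_of (s : seq 'I_k) (s_uniq : uniq s) : vertex :=
  SeqSub (etrans (mem_uniq_words s) s_uniq).

Definition hub_vertex (i : 'I_k) (x : vertex) : vertex :=
  vertex_of (take_uniq (index i (val x)) (vertex_uniq x)).

Definition branch_graph (i : 'I_k) : rel vertex := fun x y =>
  prefix (rcons (val x) i) (val y) || prefix (rcons (val y) i) (val x).

Lemma branch_graphE i x y : branch_graph i x y =
  (i \in val y) && (hub i (val y) == val x) || (i \in val x) && (hub i (val x) == val y).
Proof. by rewrite /branch_graph !prefix_rcons_hub ?vertex_uniq. Qed.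

Lemma branch_graph_simple i : simple_graph (branch_graph i).
Proof.
split=> [x | x y]; last by rewrite /branch_graph orbC.
rewrite /branch_graph orbb; apply/negP => /size_prefix.
by rewrite size_rcons ltnn.
Qed.

Lemma branch_graph_star_forest i : star_forest (branch_graph i).
Proof.
apply: (star_forest_of_center (c := hub_vertex i)) => x y.
have hub_vertexK z : hub_vertex i (hub_vertex i z) = hub_vertex i z.
  by apply: val_inj; apply: hubK.
rewrite branch_graphE => /orP[] /andP[_ /eqP hub_eq].
  have -> : x = hub_vertex i y by apply: val_inj.
  by rewrite hub_vertexK eqxx.
have -> : y = hub_vertex i x by apply: val_inj.
by rewrite hub_vertexK eqxx orbT.
Qed.

Lemma branch_graph_leaf_deg i (x : vertex) :
  i \in val x -> #|[set y | branch_graph i x y]| <= 1.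
Proof.
move=> x_i; rewrite -(cards1 (hub_vertex i x)); apply/subset_leq_card/subsetP => y.
rewrite !inE branch_graphE => /orP[] /andP[y_i /eqP hub_eq]; last exact/eqP/val_inj.
by move: (hub_notin i (val y)); rewrite hub_eq x_i.
Qed.

Lemma branch_graph_center_deg i (x : vertex) :
  i \notin val x -> #|[set y | branch_graph i x y]| <= expn k k.
Proof.
move=> x_Ni; pose code (y : vertex) := [ffun j : 'I_k => nth i (tail i (val y)) j].
have code_inj : {in [set y | branch_graph i x y] &, injective code}.
  move=> y1 y2; rewrite !inE !branch_graphE (negbTE x_Ni) !andFb !orbF.
  move=> /andP[y1_i /eqP hub1] /andP[y2_i /eqP hub2] code_eq.
  have tail_size (y : vertex) : size (tail i (val y)) <= k.
    exact/uniq_word_size/drop_uniq/vertex_uniq.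
  have tail1_Ni := tail_notin (vertex_uniq y1) y1_i.
  have tail2_Ni := tail_notin (vertex_uniq y2) y2_i.
  apply: val_inj; rewrite (hub_tailK y1_i) (hub_tailK y2_i) hub1 hub2.
  by rewrite (nth_ffun_inj tail1_Ni tail2_Ni (tail_size y1) (tail_size y2) code_eq).
rewrite -(card_in_imset code_inj); apply: leq_trans (max_card _) _.
by rewrite card_ffun !card_ord.
Qed.

Lemma branch_graph_max_deg i : max_deg_le (branch_graph i) (expn k k).
Proof.
move=> x; have [x_i | x_Ni] := boolP (i \in val x); last exact: branch_graph_center_deg.
apply: leq_trans (branch_graph_leaf_deg x_i) _.
by rewrite expn_gt0 (leq_ltn_trans _ (ltn_ord i)).
Qed.

Section NoCooperativeColoring.
Variable R : 'I_k -> {set vertex}.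
Hypothesis R_coloring : cooperative_coloring branch_graph R.

Definition color_consistent (u : vertex) :=
  forall (v : vertex) i, prefix (rcons (val v) i) (val u) -> v \in R i.

Lemma consistent_color_notin u i :
  color_consistent u -> u \in R i -> i \notin val u.
Proof.
move=> u_cons u_Ri; apply/negP => u_i.
have hub_Ri : hub_vertex i u \in R i.
  by apply: u_cons; rewrite prefix_rcons_hub ?vertex_uniq ?u_i /=.
have := R_coloring.1 i _ _ hub_Ri u_Ri.
by rewrite branch_graphE u_i eqxx.
Qed.

Lemma consistent_extend u :
  color_consistent u -> exists2 w, color_consistent w & size (val w) = (size (val u)).+1.
Proof.
move=> u_cons; have [i u_Ri] := R_coloring.2 u.
have w_uniq : uniq (rcons (val u) i).
  by rewrite rcons_uniq vertex_uniq (consistent_color_notin u_cons u_Ri).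
exists (vertex_of w_uniq); last by rewrite /= size_rcons.
move=> v j /=; rewrite prefix_rcons_eq eqseq_rcons => /orP[/andP[/eqP v_u /eqP ->] | ].
  by rewrite (val_inj v_u).
exact: u_cons.
Qed.

Lemma no_cooperative_coloring : False.
Proof.
suff [u _ u_size] : exists2 u, color_consistent u & size (val u) = k.+1.
  by move: (uniq_word_size (vertex_uniq u)); rewrite u_size ltnn.
elim: k.+1 => [|n [u u_cons <-]]; last exact: consistent_extend.
exists (vertex_of (isT : uniq [::])) => // v i.
by rewrite prefixs0 -size_eq0 size_rcons.
Qed.

End NoCooperativeColoring.

Lemma branch_graphs_not_cooperative : ~ has_cooperative_coloring branch_graph.
Proof. by case=> R; apply: no_cooperative_coloring. Qed.

End BranchGraphs.

Lemma star_admissible_lt d m : star_admissible d m -> d < expn m m.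
Proof.
move=> m_adm; rewrite ltnNge; apply/negP => le_mm_d.
apply: (@branch_graphs_not_cooperative m); apply: m_adm => // i.
split; first exact: branch_graph_simple.
split; first exact: branch_graph_star_forest.
by move=> x; apply: leq_trans (branch_graph_max_deg i x) le_mm_d.
Qed.

Local Open Scope R_scope.

Lemma INR_expn (m n : nat) : INR (expn m n) = INR m ^ n.
Proof. by elim: n => [|n IH] //; rewrite expnS mult_INR IH. Qed.

Lemma div_ln_le (t y : R) : exp 1 <= t -> 0 < y -> t < y * ln y -> t / ln t <= y.
Proof.
move=> t_ge y_gt0 t_lt.
have ln_t_ge1 : 1 <= ln t by rewrite -(ln_exp 1); apply: ln_le; first exact: exp_pos.
apply/Rle_div_l; first lra.
have [t_le_y | y_lt_t] := Rle_or_lt t y; first nra.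
have : ln y < ln t by apply: ln_increasing.
nra.
Qed.

Lemma exp1_le_ln (d : nat) : (27 <= d)%nat -> exp 1 <= ln (INR d).
Proof.
move=> d_ge27; have ln3_ge1 : 1 <= ln 3.
  rewrite -(ln_exp 1); apply: ln_le; [exact: exp_pos | exact: exp_le_3].
have : ln 27 <= ln (INR d).
  have := le_INR _ _ (leP d_ge27); rewrite INR_IZR_INZ /= => d_ge27R.
  by apply: ln_le; lra.
have -> : 27 = 3 ^ 3 by ring.
rewrite ln_pow; last lra.
have := exp_le_3; rewrite /=; lra.
Qed.

Lemma ln_div_lnln_le (d m : nat) : (27 <= d)%nat -> (d < expn m m)%nat ->
  ln (INR d) / ln (ln (INR d)) <= INR m.
Proof.
move=> d_ge27 d_lt; have m_gt0 : (0 < m)%nat.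
  by case: m d_lt => //; rewrite expn0 ltnS leqn0 => /eqP d0; rewrite d0 in d_ge27.
have d_gt0 : 0 < INR d by apply/lt_0_INR/ltP/(leq_trans _ d_ge27).
apply: div_ln_le; first exact: exp1_le_ln.
  exact/lt_0_INR/ltP.
rewrite -ln_pow; last exact/lt_0_INR/ltP.
by apply: ln_increasing => //; rewrite -INR_expn; apply/lt_INR/ltP.
Qed.

Theorem theorem1 :
  exists eps : nat -> R, Un_cv eps 0%R /\
    forall d : nat,
      mS_ge d ((1 + eps d) * (ln (INR d) / ln (ln (INR d))))%R.
Proof.
exists (fun d => if (27 <= d)%nat then 0 else -1); split.
  move=> e e_gt0; exists 27%nat => n /leP n_ge27.
  by rewrite n_ge27 /R_dist Rminus_0_r Rabs_R0.
move=> d m /star_admissible_lt d_lt; case: ifP => d_ge27.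
  by rewrite Rplus_0_r Rmult_1_l; apply: ln_div_lnln_le.
by rewrite Rplus_opp_r Rmult_0_l; apply: pos_INR.
Qed.
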